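(* Let $G$ be a finite group, $\rho':G\to \mathrm{U}(\mathcal{H})$ an irreducible unitary representation on a $d$-dimensional complex Hilbert space $\mathcal{H}$ with character $\chi$. Let $H\leq G$, let $\nu$ be an irreducible character of $H$, and let $\Pi_{1}$ be the orthogonal projection of $L^2(H)$ onto some subspace of $L^2(H)$ that is invariant and irreducible under the left regular representation of $H$ and affords the character $\nu$. Since $\Pi_1$ commutes with the left regular representation, $\Pi_1 f=f*p$ for a unique $p\in L^2(H)$; write $\Pi_1[s,1]=p(s)$ for $s\in H$. Then there exist a unique subspace $V\subseteq\mathcal{H}$ with $\dim V=\nu(1)$ and a nonzero vector $v\in V$, unique up to a scalar factor, such that $$\langle v,\rho'(s)v\rangle=\frac{\langle v,v\rangle\,|H|}{\dim V}\,\Pi_1[s,1]\quad\text{for all } s\in H$$ if and only if $$\sum_{s\in H}\chi(s)\overline{\nu(s)}=|H|.$$ In that case the group frame $\Phi=(\rho'(g)v)_{g\in G}$ is tight and its Gram matrix $G_\Phi=[\langle\rho'(g_2)v,\rho'(g_1)v\rangle]_{g_1,g_2\in G}$ satisfies $$G_\Phi=\langle v,v\rangle\,\frac{|G|}{d}\,\Pi_\chi\Pi_1',$$ where $\Pi_\chi$ and $\Pi_1'$ are the operators on $L^2(G)$ defined in the context.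
   Context: For a finite group $K$, $L^2(K)$ is the space of functions $K\to\mathbb{C}$ with convolution $(f*h)(s)=\sum_{g\in K}f(g)h(g^{-1}s)$; the left regular representation is $\rho(g)f=\delta_g*f$, where $\delta_g$ is the indicator function of $\{g\}$. Operators on $L^2(K)$ are identified with matrices indexed by $K\times K$ in the basis $(\delta_g)$; the operator $f\mapsto f*h$ has matrix entries $[s,g]=h(g^{-1}s)$. For an irreducible character $\chi$ of $G$, $\Pi_\chi f=\frac{\chi(1)}{|G|}\,\overline{\chi}*f$ is the projection of $L^2(G)$ onto its $\chi$-isotypic subspace. With $p\in L^2(H)$ as in the claim, $p'\in L^2(G)$ is defined by $p'(s)=p(s)$ if $s\in H$ and $p'(s)=0$ otherwise, and $\Pi_1'f=f*p'$ for $f\in L^2(G)$. A frame is a finite spanning sequence of vectors; it is tight if $\sum_j|\langle u,\phi_j\rangle|^2=A\|u\|^2$ for all $u$ with a constant $A>0$. The inner product is linear in the first argument. *)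

From HB Require Import structures.
From mathcomp Require Import all_boot all_order all_algebra.
From mathcomp Require Import all_fingroup all_solvable all_field all_character.
Set Implicit Arguments. Unset Strict Implicit. Unset Printing Implicit Defensive.
Import Order.TTheory GRing.Theory Num.Theory.
Local Open Scope ring_scope.

(* L^2 of a finite group K <= gT: functions gT -> C (only values on K matter;
   elements of L^2(K) are those supported in K). *)
Definition L2 (gT : finGroupType) := {ffun gT -> algC^o}.

Section Defs.
Variable gT : finGroupType.

Definition supp_in (K : {set gT}) (f : L2 gT) := forall s, s \notin K -> f s = 0.

Definition delta (g : gT) : L2 gT := [ffun s => (s == g)%:R].

Definition conv (K : {set gT}) (f h : L2 gT) : L2 gT :=
  [ffun s => \sum_(g in K) f g * h (g^-1 * s)%g].

Definition lreg (K : {set gT}) (g : gT) (f : L2 gT) : L2 gT := conv K (delta g) f.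

Definition ipL2 (K : {set gT}) (f h : L2 gT) : algC := \sum_(s in K) f s * (h s)^*.

Definition lreg_invariant (K : {set gT}) (W : {vspace L2 gT}) :=
  (forall f, f \in W -> supp_in K f) /\
  (forall g f, g \in K -> f \in W -> lreg K g f \in W).

Definition lreg_irreducible (K : {set gT}) (W : {vspace L2 gT}) :=
  [/\ lreg_invariant K W, W != 0%VS &
      forall U : {vspace L2 gT}, (U <= W)%VS -> lreg_invariant K U ->
        U = 0%VS \/ U = W].

Definition afforded_char (K : {set gT}) (W : {vspace L2 gT}) (g : gT) : algC :=
  \sum_(i < \dim W) coord (vbasis W) i (lreg K g (vbasis W)`_i).

Definition is_orth_proj (K : {set gT}) (W : {vspace L2 gT}) (P : L2 gT -> L2 gT) :=
  forall f, supp_in K f ->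
    P f \in W /\ (forall w, w \in W -> ipL2 K (f - P f) w = 0).

Definition ext0 (K : {set gT}) (p : L2 gT) : L2 gT :=
  [ffun s => if s \in K then p s else 0].

Definition Pi_chi (K : {set gT}) (chi : gT -> algC) (f : L2 gT) : L2 gT :=
  (chi 1%g / #|K|%:R) *: conv K [ffun s => (chi s)^*] f.

Definition Pi1' (G H : {set gT}) (p f : L2 gT) : L2 gT := conv G f (ext0 H p).

(* matrix entry [s, g] of an operator T : (T delta_g)(s) *)
Definition op_entry (T : L2 gT -> L2 gT) (s g : gT) : algC := T (delta g) s.

End Defs.

(* The Hilbert space C^d, as column vectors; rho'(g) v := rG g *m v. *)
Definition ipC (d : nat) (u w : 'cV[algC]_d) : algC :=
  \sum_(i < d) u i 0 * (w i 0)^*.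

Definition unitary_repr (gT : finGroupType) (G : {group gT}) (d : nat)
  (rG : mx_representation algC G d) :=
  forall g, g \in G -> forall u w : 'cV[algC]_d,
    ipC (rG g *m u) (rG g *m w) = ipC u w.

Definition tight_frame (I : finType) (J : {set I}) (d : nat)
  (phi : I -> 'cV[algC]_d) :=
  (forall u : 'cV[algC]_d, exists c : I -> algC, u = \sum_(j in J) c j *: phi j) /\
  exists A : algC, 0 < A /\
    forall u : 'cV[algC]_d, \sum_(j in J) `|ipC u (phi j)| ^+ 2 = A * ipC u u.

(** Put p := Pi1 delta_1. Orthogonality of Pi1 makes p reproduce values at 1 on W,
    hence right convolution by p is Pi1, p(s^-1) = conj p(s) and p * p = p; tracing
    the action of H on W = L2(H) * p gives nu(s) = sum_x p(x^-1 s^-1 x), so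
    nu(1) = |H| p(1) and sum chi conj(nu) = |H| sum chi(s) p(s).
    Therefore E := sum_(s in H) p(s) rho'(s) is an orthogonal projection of C^d of
    rank tr E = (sum chi conj(nu)) / |H|. The coefficient condition on v says exactly
    that E v = v: in one direction <E v, v> = <v, v>; in the other, Schur's lemma
    applied to the coefficient function s |-> <v, rho'(s) v>, which is invariant under
    convolution by p on both sides. A nonzero fixed vector v determines V as the image
    of W under f |-> rho'(f) v, which is injective on W by irreducibility. So (V, v)
    is unique up to scaling of v iff E has rank one. Tightness is Schur's lemma for
    rho', and when E is the rank-one projection onto v the Gram entry
    <rho'(g2) v, rho'(g1) v> is <v, v> tr (E rho'(g1^-1 g2)), which unfolds to the
    entry of Pi_chi Pi1'. *)

From HB Require Import structures.
From mathcomp Require Import all_boot all_order all_algebra.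
From mathcomp Require Import all_fingroup all_solvable all_field all_character.
From mathcomp Require Import ring.
Set Implicit Arguments. Unset Strict Implicit. Unset Printing Implicit Defensive.
Import Order.TTheory GRing.Theory Num.Theory.
Local Open Scope ring_scope.

Section LinearAlgebra.
Variables (K : fieldType) (vT : vectType K).

Lemma linfun_exists (rT : vectType K) (F : vT -> rT) : linear F ->
  exists L : 'Hom(vT, rT), forall x, L x = F x.
Proof.
move=> linF; pose fL : {linear _ -> _} := HB.pack F (GRing.isLinear.Build _ _ _ _ F linF).
by exists (linfun fL) => x; rewrite lfunE.
Qed.

Lemma vbasis_nth_mem (U : {vspace vT}) k : (vbasis U)`_k \in U.
Proof.
have [kU|Uk] := ltnP k (\dim U); first by rewrite vbasis_mem ?mem_nth ?size_tuple.
by rewrite nth_default ?size_tuple ?mem0v.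
Qed.

(* Both sides are the trace of A: on the left in the coordinate system (e, phi)
   of vT, on the right restricted to U. *)
Lemma trace_coord_vbasis (U : {vspace vT}) (I : finType) (e : I -> vT)
    (phi : I -> vT -> K) (A : vT -> vT) :
  (forall x, x = \sum_i phi i x *: e i) ->
  (forall i x y, phi i (x + y) = phi i x + phi i y) ->
  (forall i a x, phi i (a *: x) = a * phi i x) ->
  linear A -> (forall x, A x \in U) ->
  \sum_i phi i (A (e i)) =
  \sum_(k < \dim U) coord (vbasis U) k (A (vbasis U)`_k).
Proof.
move=> eE phiD phiZ linA AU; have [L LE] := linfun_exists linA.
have phi0 i : phi i 0 = 0 by rewrite -(scale0r (0 : vT)) phiZ mul0r.
have phi_sum i (J : finType) (F : J -> vT) : phi i (\sum_j F j) = \sum_j phi i (F j).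
  exact: (big_morph (phi i) (phiD i) (phi0 i)).
transitivity (\sum_i \sum_(k < \dim U)
    coord (vbasis U) k (A (e i)) * phi i (vbasis U)`_k).
  apply: eq_bigr => i _; rewrite {1}(coord_vbasis (AU (e i))) phi_sum.
  by apply: eq_bigr => k _; rewrite phiZ.
rewrite exchange_big /=; apply: eq_bigr => k _.
rewrite {2}(eE (vbasis U)`_k) -LE !linear_sum; apply: eq_bigr => i _.
by rewrite !linearZ /= LE mulrC.
Qed.

Lemma dimv1_line (U : {vspace vT}) v : v \in U -> v != 0 -> \dim U = 1%N -> U = <[v]>%VS.
Proof. by move=> Uv v0 dU; apply/eqP; rewrite eq_sym eqEdim -memvE Uv dim_vline v0 dU. Qed.

End LinearAlgebra.

Lemma eigenvector_exists (K : closedFieldType) (vT : vectType K) (U : {vspace vT})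
    (A : vT -> vT) :
  linear A -> U != 0%VS -> (forall u, u \in U -> A u \in U) ->
  exists lam, exists2 u, u \in U & u != 0 /\ A u = lam *: u.
Proof.
move=> linA U0 AU; have [L LE] := linfun_exists linA.
set n := \dim U; have n_gt0 : (0 < n)%N by rewrite lt0n dimv_eq0.
pose b := vbasis U.
pose M : 'M[K]_n := \matrix_(j, i) coord b i (A b`_j).
have [lam] : exists lam, eigenvalue M lam.
  have : size (char_poly M) != 1%N by rewrite size_char_poly eqSS -lt0n.
  by case/closed_rootP => lam; rewrite -eigenvalue_root_char; exists lam.
case/eigenvalueP => c cM c0.
exists lam, (\sum_j c 0 j *: b`_j).
  by apply: memv_suml => j _; rewrite memvZ ?vbasis_nth_mem.
split.
  apply: contra c0 => /eqP u0; apply/eqP/rowP => j; rewrite mxE.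
  by move/freeP: (basis_free (vbasisP U)) => /(_ (fun j => c 0 j) u0 j).
rewrite -LE linear_sum.
transitivity (\sum_j \sum_i (c 0 j * M j i) *: b`_i).
  apply: eq_bigr => j _; rewrite linearZ /= LE (coord_vbasis (AU _ (vbasis_nth_mem U j))).
  by rewrite scaler_sumr; apply: eq_bigr => i _; rewrite mxE scalerA.
rewrite exchange_big /= scaler_sumr; apply: eq_bigr => i _.
rewrite -scaler_suml scalerA; congr (_ *: _).
by have := congr1 (fun m : 'rV_n => m 0 i) cM; rewrite !mxE => <-.
Qed.

Section IdempotentMatrix.
Variables (K : fieldType) (d : nat) (E : 'M[K]_d).

Definition mx_fixspace := fixedSpace (linfun (mulmx E : 'cV[K]_d -> 'cV[K]_d)).

Lemma mem_mx_fixspace x : (x \in mx_fixspace) = (E *m x == x).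
Proof. by apply/fixedSpaceP/eqP; rewrite lfunE. Qed.

Hypothesis E_idem : E *m E = E.

Lemma mulmx_fixspace x : E *m x \in mx_fixspace.
Proof. by rewrite mem_mx_fixspace mulmxA E_idem. Qed.

Lemma mxtrace_idem : \tr E = (\dim mx_fixspace)%:R.
Proof.
have eE (x : 'cV[K]_d) : x = \sum_i x i 0 *: delta_mx i 0.
  by rewrite {1}(matrix_sum_delta x); apply: eq_bigr => i _; rewrite big_ord1.
have linE : linear (mulmx E : 'cV[K]_d -> 'cV[K]_d).
  by move=> a x y; rewrite mulmxDr scalemxAr.
have trE := @trace_coord_vbasis _ _ mx_fixspace _ _ (fun i x => x i 0) _
  eE (fun i x y => mxE _ _ _ _) (fun i a x => mxE _ _ _ _) linE mulmx_fixspace.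
rewrite /= in trE.
have -> : \tr E = \sum_i (E *m delta_mx i (0 : 'I_1)) i 0.
  by apply: eq_bigr => i _; rewrite -colE mxE.
rewrite trE; transitivity (\sum_(k < \dim mx_fixspace) (1 : K));
  last by rewrite sumr_const card_ord.
apply: eq_bigr => k _.
have /eqP -> : E *m (vbasis mx_fixspace)`_k == (vbasis mx_fixspace)`_k.
  by rewrite -mem_mx_fixspace vbasis_nth_mem.
by rewrite coord_free ?eqxx // (basis_free (vbasisP _)).
Qed.

End IdempotentMatrix.

Section GroupSums.
Variables (R : nmodType) (gT : finGroupType) (K : {group gT}) (F : gT -> R).

Lemma sum_mulgl x : x \in K -> \sum_(s in K) F s = \sum_(s in K) F (x * s)%g.
Proof.
by move=> Kx; rewrite (reindex_inj (mulgI x)); apply: eq_bigl => s; rewrite groupMl.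
Qed.

Lemma sum_invg : \sum_(s in K) F s = \sum_(s in K) F s^-1%g.
Proof. by rewrite (reindex_inj invg_inj); apply: eq_bigl => s; rewrite groupV. Qed.

Lemma sum_conjg x : x \in K -> \sum_(s in K) F s = \sum_(s in K) F (s ^ x)%g.
Proof.
by move=> Kx; rewrite (reindex_inj (conjg_inj x)); apply: eq_bigl => s; rewrite groupJr.
Qed.

End GroupSums.

Lemma scaleCE (a b : algC^o) : a *: b = a * b.
Proof. by []. Qed.

Section L2Algebra.
Variables (gT : finGroupType) (K : {group gT}).
Implicit Types (f h : L2 gT).

Lemma lregE g f s : g \in K -> lreg K g f s = f (g^-1 * s)%g.
Proof.
move=> Kg; rewrite ffunE (bigD1 g) //= ffunE eqxx mul1r big1 ?addr0 //.
by move=> a /andP[_ /negbTE ne]; rewrite ffunE ne mul0r.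
Qed.

Lemma lreg1 f : lreg K 1 f = f.
Proof. by apply/ffunP => s; rewrite lregE // invg1 mul1g. Qed.

Lemma lregD g f1 f2 : lreg K g (f1 + f2) = lreg K g f1 + lreg K g f2.
Proof.
by apply/ffunP => s; rewrite !ffunE -big_split; apply: eq_bigr => a _; rewrite !ffunE mulrDr.
Qed.

Lemma lregB g f1 f2 : lreg K g (f1 - f2) = lreg K g f1 - lreg K g f2.
Proof.
by apply/ffunP => s; rewrite !ffunE -sumrB; apply: eq_bigr => a _; rewrite !ffunE mulrBr.
Qed.

Lemma lregZ g a f : lreg K g (a *: f) = a *: lreg K g f.
Proof.
apply/ffunP => s; rewrite !ffunE scaleCE mulr_sumr; apply: eq_bigr => b _.
by rewrite !ffunE !scaleCE mulrCA.
Qed.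

Lemma convD f1 f2 h : conv K (f1 + f2) h = conv K f1 h + conv K f2 h.
Proof.
by apply/ffunP => s; rewrite !ffunE -big_split; apply: eq_bigr => a _; rewrite !ffunE mulrDl.
Qed.

Lemma convZ a f h : conv K (a *: f) h = a *: conv K f h.
Proof.
apply/ffunP => s; rewrite !ffunE scaleCE mulr_sumr; apply: eq_bigr => b _.
by rewrite !ffunE !scaleCE mulrA.
Qed.

Lemma conv_suml (I : finType) (F : I -> L2 gT) h :
  conv K (\sum_i F i) h = \sum_i conv K (F i) h.
Proof.
apply: (big_morph (fun x => conv K x h)) => [x y|]; first exact: convD.
by apply/ffunP => s; rewrite !ffunE big1 // => a _; rewrite ffunE mul0r.
Qed.

Lemma conv_lreg g f h : g \in K -> conv K (lreg K g f) h = lreg K g (conv K f h).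
Proof.
move=> Kg; apply/ffunP => s; rewrite lregE // !ffunE (sum_mulgl _ Kg).
by apply: eq_bigr => a Ka; rewrite lregE // mulKg invMg mulgA.
Qed.

Lemma convA f1 f2 f3 : conv K (conv K f1 f2) f3 = conv K f1 (conv K f2 f3).
Proof.
apply/ffunP => s; rewrite !ffunE.
under eq_bigr => c _ do rewrite ffunE mulr_suml.
rewrite exchange_big /=; apply: eq_bigr => a Ka.
rewrite ffunE mulr_sumr (sum_mulgl _ Ka); apply: eq_bigr => b Kb.
by rewrite mulKg invMg mulgA mulrA.
Qed.

Lemma ipL2B f1 f2 h : ipL2 K (f1 - f2) h = ipL2 K f1 h - ipL2 K f2 h.
Proof. by rewrite /ipL2 -sumrB; apply: eq_bigr => s _; rewrite !ffunE mulrBl. Qed.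

Lemma ipL2C f h : ipL2 K f h = (ipL2 K h f)^*.
Proof.
by rewrite /ipL2 rmorph_sum; apply: eq_bigr => s _; rewrite rmorphM /= conjCK mulrC.
Qed.

Lemma ipL2_lreg x f h : x \in K -> ipL2 K (lreg K x f) h = ipL2 K f (lreg K x^-1 h).
Proof.
move=> Kx; rewrite /ipL2 (sum_mulgl _ Kx); apply: eq_bigr => s Ks.
by rewrite !lregE ?groupV // mulKg invgK.
Qed.

Lemma ipL2_delta1 h : ipL2 K (delta 1%g) h = (h 1%g)^*.
Proof.
rewrite /ipL2 (bigD1 1%g) //= ffunE eqxx mul1r big1 ?addr0 //.
by move=> s /andP[_ /negbTE ne]; rewrite ffunE ne mul0r.
Qed.

Lemma supp_delta1 : supp_in K (delta 1%g).
Proof. by move=> s; apply: contraNeq; rewrite ffunE pnatr_eq0 eqb0 negbK => /eqP->. Qed.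

Lemma ffun_sum_delta f : f = \sum_x f x *: delta x.
Proof.
apply/ffunP => x; rewrite sum_ffunE (bigD1 x) //= !ffunE eqxx scaleCE mulr1 big1 ?addr0 //.
by move=> y /negbTE ne; rewrite !ffunE eq_sym ne scaleCE mulr0.
Qed.

Lemma afforded_char1 (W : {vspace L2 gT}) : afforded_char K W 1%g = (\dim W)%:R.
Proof.
rewrite /afforded_char -[X in X%:R]card_ord -sumr_const; apply: eq_bigr => k _.
by rewrite lreg1 coord_free ?eqxx // (basis_free (vbasisP W)).
Qed.

End L2Algebra.

Section ProjectionKernel.
Variables (gT : finGroupType) (H : {group gT}) (W : {vspace L2 gT})
  (Pi1 : L2 gT -> L2 gT).
Hypotheses (W_inv : lreg_invariant H W) (Pi1_proj : is_orth_proj H W Pi1).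
Local Notation p := (Pi1 (delta 1%g)).

Lemma p_mem : p \in W.
Proof. exact: (Pi1_proj (@supp_delta1 _ H)).1. Qed.

Lemma p_supp s : s \notin H -> p s = 0.
Proof. exact: (W_inv.1 _ p_mem s). Qed.

Lemma ipL2_p w : w \in W -> ipL2 H p w = (w 1%g)^*.
Proof.
move=> Ww; have /eqP := (Pi1_proj (@supp_delta1 _ H)).2 w Ww.
by rewrite ipL2B ipL2_delta1 subr_eq0 => /eqP.
Qed.

Lemma p_lreg_mem g : g \in H -> lreg H g p \in W.
Proof. by move=> Hg; apply: W_inv.2 Hg p_mem. Qed.

Lemma pV s : s \in H -> p s^-1%g = (p s)^*.
Proof.
move=> Hs; have := ipL2_lreg p p (groupVr Hs).
rewrite invgK ipL2C !ipL2_p ?p_lreg_mem ?groupV // !lregE ?groupV //.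
by rewrite invgK !mulg1 conjCK => ->; rewrite conjCK.
Qed.

(* (w * p)(x) = <w, lreg x p> = conj <p, lreg x^-1 w> = w(x). *)
Lemma conv_p w : w \in W -> conv H w p = w.
Proof.
move=> Ww; apply/ffunP => x; rewrite ffunE.
have [Hx|Hx] := boolP (x \in H); last first.
  rewrite W_inv.1 // big1 // => g Hg.
  by rewrite p_supp ?mulr0 // groupMl ?groupV.
transitivity (ipL2 H w (lreg H x p)).
  apply: eq_bigr => g Hg; rewrite lregE // -pV ?groupM ?groupV //.
  by rewrite invMg invgK.
rewrite ipL2C ipL2_lreg // ipL2_p ?W_inv.2 ?groupV // conjCK.
by rewrite lregE ?groupV // invgK mulg1.
Qed.

Lemma conv_pp : conv H p p = p.
Proof. exact: conv_p p_mem. Qed.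

Lemma conv_p_mem f : conv H f p \in W.
Proof.
have -> : conv H f p = \sum_(a in H) f a *: lreg H a p.
  by apply/ffunP => x; rewrite sum_ffunE ffunE; apply: eq_bigr => a Ha; rewrite [RHS]ffunE lregE.
by apply: memv_suml => a Ha; rewrite memvZ ?p_lreg_mem.
Qed.

Lemma afforded_charE g : g \in H ->
  afforded_char H W g = \sum_(x in H) p (x^-1 * g^-1 * x)%g.
Proof.
move=> Hg; rewrite /afforded_char.
transitivity (\sum_(k < \dim W) coord (vbasis W) k
                (lreg H g (conv H (vbasis W)`_k p))).
  by apply: eq_bigr => k _; rewrite conv_p ?vbasis_nth_mem.
rewrite -(@trace_coord_vbasis _ _ W gT (@delta gT) (fun x f => f x)
            (fun f => lreg H g (conv H f p))); first last.
- by move=> f; rewrite W_inv.2 ?conv_p_mem.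
- by move=> a f1 f2; rewrite convD convZ lregD lregZ.
- by move=> x a f; rewrite ffunE.
- by move=> x f1 f2; rewrite ffunE.
- exact: ffun_sum_delta.
rewrite (eq_bigr (fun x => \sum_(a in H) delta x a * p (a^-1 * (g^-1 * x))%g));
  last by move=> x _; rewrite lregE // ffunE.
rewrite exchange_big /=; apply: eq_bigr => a Ha.
rewrite (bigD1 a) //= ffunE eqxx mul1r big1 ?addr0 ?mulgA //.
by move=> x /negbTE ne; rewrite ffunE eq_sym ne mul0r.
Qed.

Lemma dimv_p1 : #|H|%:R * p 1%g = (\dim W)%:R.
Proof.
rewrite -(afforded_char1 H) afforded_charE // mulr_natl -sumr_const.
by apply: eq_bigr => x _; rewrite invg1 mulg1 mulVg.
Qed.

Lemma sum_cfun_afforded_char (G : {group gT}) (chi : 'CF(G)) : H \subset G ->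
  \sum_(s in H) chi s * (afforded_char H W s)^* =
  #|H|%:R * \sum_(s in H) chi s * p s.
Proof.
move=> HG.
transitivity (\sum_(x in H) \sum_(s in H) chi s * p (s ^ x)%g).
  rewrite exchange_big /=; apply: eq_bigr => s Hs.
  rewrite afforded_charE // rmorph_sum mulr_sumr; apply: eq_bigr => x Hx.
  by rewrite /= -pV ?groupM ?groupV // !invMg !invgK mulgA conjgE mulgA.
rewrite mulr_natl -sumr_const; apply: eq_bigr => x Hx.
rewrite (sum_conjg _ (groupVr Hx)); apply: eq_bigr => s Hs.
by rewrite conjgKV cfunJ // (subsetP HG) ?groupV.
Qed.

End ProjectionKernel.

Lemma lreg_irreducible_conv_scalar (gT : finGroupType) (K : {group gT})
    (W : {vspace L2 gT}) f :
  lreg_irreducible K W -> (forall w, w \in W -> conv K w f \in W) ->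
  exists lam, forall w, w \in W -> conv K w f = lam *: w.
Proof.
case=> W_inv W0 W_min W_f.
have lin_f : linear (fun x => conv K x f) by move=> a x y; rewrite convD convZ.
have [lam [w Ww [w0 fw]]] := eigenvector_exists lin_f W0 W_f.
have linL : linear (fun x => conv K x f - lam *: x).
  move=> a x y /=; rewrite convD convZ scalerDr scalerBr !scalerA [lam * a]mulrC.
  by rewrite opprD addrACA.
have [L LE] := linfun_exists linL.
have U_inv : lreg_invariant K (W :&: lker L)%VS.
  split=> [x /memv_capP[Wx _]|g x Kg /memv_capP[Wx]]; first exact: W_inv.1.
  rewrite memv_ker LE => /eqP Lx; rewrite memv_cap W_inv.2 //= memv_ker LE.
  by rewrite conv_lreg // -lregZ -lregB Lx -[X in lreg _ _ X](scale0r 0) lregZ scale0r.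
have [U0|UW] := W_min _ (capvSl _ _) U_inv.
  have : w \in (W :&: lker L)%VS by rewrite memv_cap Ww memv_ker LE fw subrr eqxx.
  by rewrite U0 memv0 (negbTE w0).
exists lam => x Wx; have : x \in (W :&: lker L)%VS by rewrite UW.
by rewrite memv_cap memv_ker LE subr_eq0 => /andP[_ /eqP].
Qed.

Section InnerProduct.
Variable d : nat.
Implicit Types (u w x : 'cV[algC]_d).

Lemma ipCDl u w x : ipC (u + w) x = ipC u x + ipC w x.
Proof. by rewrite /ipC -big_split; apply: eq_bigr => i _; rewrite mxE mulrDl. Qed.

Lemma ipCZl a u x : ipC (a *: u) x = a * ipC u x.
Proof. by rewrite /ipC mulr_sumr; apply: eq_bigr => i _; rewrite mxE mulrA. Qed.

Lemma ipCZr a u x : ipC x (a *: u) = a^* * ipC x u.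
Proof. by rewrite /ipC mulr_sumr; apply: eq_bigr => i _; rewrite mxE rmorphM mulrCA. Qed.

Lemma ipCC u w : ipC u w = (ipC w u)^*.
Proof.
by rewrite /ipC rmorph_sum; apply: eq_bigr => i _; rewrite rmorphM /= conjCK mulrC.
Qed.

Lemma ipCBl u w x : ipC (u - w) x = ipC u x - ipC w x.
Proof. by rewrite ipCDl -scaleN1r ipCZl mulN1r. Qed.

Lemma ipCBr u w x : ipC x (u - w) = ipC x u - ipC x w.
Proof. by rewrite ipCC ipCBl rmorphB /= -!ipCC. Qed.

Lemma ipC_suml (I : finType) (P : pred I) (F : I -> 'cV[algC]_d) x :
  ipC (\sum_(i | P i) F i) x = \sum_(i | P i) ipC (F i) x.
Proof.
apply: (big_morph (fun y => ipC y x) (fun u w => ipCDl u w x)).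
by rewrite /ipC big1 // => i _; rewrite mxE mul0r.
Qed.

Lemma ipC_sumr (I : finType) (P : pred I) (F : I -> 'cV[algC]_d) x :
  ipC x (\sum_(i | P i) F i) = \sum_(i | P i) ipC x (F i).
Proof. by rewrite ipCC ipC_suml rmorph_sum; apply: eq_bigr => i _; rewrite /= -ipCC. Qed.

Lemma ipC_ge0 u : 0 <= ipC u u.
Proof. by apply: sumr_ge0 => i _; apply: mul_conjC_ge0. Qed.

Lemma ipC_eq0 u : (ipC u u == 0) = (u == 0).
Proof.
apply/idP/eqP => [|->]; last by rewrite /ipC big1 // => i _; rewrite mxE mul0r.
rewrite psumr_eq0 => [/allP u0|i _]; last exact: mul_conjC_ge0.
apply/colP => i; rewrite mxE; apply/eqP; rewrite -mul_conjC_eq0.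
by apply: u0; rewrite mem_index_enum.
Qed.

Lemma ipC_gt0 u : u != 0 -> 0 < ipC u u.
Proof. by rewrite lt_def ipC_eq0 ipC_ge0 andbT. Qed.

Lemma ipC_mx u w : ipC u w = ((map_mx (fun z : algC => z^*) w)^T *m u) 0 0.
Proof. by rewrite /ipC mxE; apply: eq_bigr => i _; rewrite !mxE mulrC. Qed.

Lemma ipC_delta_mx i u : ipC (delta_mx i 0) u = (u i 0)^*.
Proof.
rewrite /ipC (bigD1 i) //= mxE eqxx mul1r big1 ?addr0 // => j /negbTE ji.
by rewrite mxE ji mul0r.
Qed.

End InnerProduct.

Lemma mulmx_cV_inj (K : fieldType) (d : nat) (M N : 'M[K]_d) :
  (forall x : 'cV[K]_d, M *m x = N *m x) -> M = N.
Proof.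
move=> MN; apply/matrixP => i j.
by have := congr1 (fun c : 'cV[K]_d => c i 0) (MN (delta_mx j 0)); rewrite -!colE !mxE.
Qed.

Section UnitaryRepresentation.
Variables (gT : finGroupType) (G : {group gT}) (d : nat)
  (rG : mx_representation algC G d).
Hypothesis rG_unitary : unitary_repr rG.

Lemma ipC_repr_adj g u w : g \in G -> ipC (rG g *m u) w = ipC u (rG g^-1%g *m w).
Proof.
move=> Gg; rewrite -{1}[w](mul1mx w) -(repr_mx1 rG) -(mulgV g).
by rewrite repr_mxM ?groupV // -mulmxA rG_unitary.
Qed.

Hypothesis rG_irr : mx_irreducible rG.

Lemma repr_dim_gt0 : (0 < d)%N.
Proof. by case/mx_abs_irrP: (group_closure_closed_field rG_irr). Qed.

(* The frame operator commutes with rG, so it is scalar by Schur's lemma. *)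
Lemma frame_operator_scalar v x :
  \sum_(g in G) ipC x (rG g *m v) *: (rG g *m v) = (#|G|%:R * ipC v v / d%:R) *: x.
Proof.
pose F : 'M[algC]_d :=
  \sum_(g in G) rG g *m v *m (map_mx (fun z : algC => z^*) (rG g *m v))^T.
have Fx y : F *m y = \sum_(g in G) ipC y (rG g *m v) *: (rG g *m v).
  rewrite mulmx_suml; apply: eq_bigr => g _.
  by rewrite -(mulmxA (rG g *m v)) [_ *m y]mx11_scalar mul_mx_scalar ipC_mx.
have F_cent : centgmx rG F.
  apply/centgmxP => h Gh; apply: mulmx_cV_inj => y.
  rewrite -mulmxA Fx -mulmxA Fx mulmx_sumr (sum_mulgl _ Gh).
  apply: eq_bigr => g Gg; rewrite ipC_repr_adj // mulmxA -repr_mxM ?groupV ?groupM //.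
  by rewrite mulKg -scalemxAr mulmxA -repr_mxM.
have [c Fc] := is_scalar_mxP
  (mx_abs_irr_cent_scalar (group_closure_closed_field rG_irr) F_cent).
have trF : \tr F = #|G|%:R * ipC v v.
  rewrite raddf_sum /= mulr_natl -sumr_const; apply: eq_bigr => g Gg.
  by rewrite mxtrace_mulC /mxtrace big_ord1 -ipC_mx rG_unitary.
have -> : #|G|%:R * ipC v v / d%:R = c.
  by rewrite -trF Fc mxtrace_scalar -[c *+ d]mulr_natr mulfK // pnatr_eq0 -lt0n repr_dim_gt0.
by rewrite -Fx Fc mul_scalar_mx.
Qed.

Lemma tight_frame_orbit v : v != 0 -> tight_frame G (fun g => rG g *m v).
Proof.
move=> v0; set a := #|G|%:R * ipC v v / d%:R.
have a_gt0 : 0 < a.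
  by rewrite divr_gt0 ?ltr0n ?repr_dim_gt0 // mulr_gt0 ?ltr0n ?cardG_gt0 ?ipC_gt0.
split.
  move=> x; exists (fun g => a^-1 * ipC x (rG g *m v)).
  under eq_bigr => g _ do rewrite -scalerA.
  by rewrite -scaler_sumr frame_operator_scalar scalerA mulVf ?gt_eqF // scale1r.
exists a; split => // x.
rewrite -ipCZl -frame_operator_scalar ipC_suml; apply: eq_bigr => g _.
by rewrite ipCZl normCK -ipCC.
Qed.

End UnitaryRepresentation.

Section RepresentationOnL2.
Variables (gT : finGroupType) (G H : {group gT}) (d : nat)
  (rG : mx_representation algC G d).
Hypothesis HG : H \subset G.
Implicit Types (f h : L2 gT) (u v w : 'cV[algC]_d).

Let sHG s : s \in H -> s \in G. Proof. exact: subsetP HG s. Qed.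

Definition repr_L2 (f : L2 gT) : 'M[algC]_d := \sum_(s in H) f s *: rG s.

Definition repr_stable (V : {vspace 'cV[algC]_d}) :=
  forall s w, s \in H -> w \in V -> rG s *m w \in V.

Definition repr_coef (v : 'cV[algC]_d) : L2 gT :=
  [ffun s => if s \in H then ipC v (rG s *m v) else 0].

Lemma repr_L2_mulmx f v : repr_L2 f *m v = \sum_(s in H) f s *: (rG s *m v).
Proof. by rewrite mulmx_suml; apply: eq_bigr => s _; rewrite scalemxAl. Qed.

Lemma repr_L2_conv f h : repr_L2 f *m repr_L2 h = repr_L2 (conv H f h).
Proof.
rewrite {1}/repr_L2 mulmx_suml.
transitivity (\sum_(a in H) \sum_(s in H) (f a * h (a^-1 * s)%g) *: rG s).
  apply: eq_bigr => a Ha; rewrite -scalemxAl /repr_L2 mulmx_sumr scaler_sumr.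
  rewrite (sum_mulgl _ (groupVr Ha)); apply: eq_bigr => s Hs.
  by rewrite -scalemxAr scalerA -repr_mxM ?sHG ?groupM ?groupV // mulKVg.
rewrite exchange_big /=; apply: eq_bigr => s Hs.
by rewrite -scaler_suml ffunE.
Qed.

Lemma repr_L2_lreg g f : g \in H -> repr_L2 (lreg H g f) = rG g *m repr_L2 f.
Proof.
move=> Hg; rewrite /repr_L2 mulmx_sumr (sum_mulgl _ Hg); apply: eq_bigr => s Hs.
by rewrite lregE // mulKg -scalemxAr repr_mxM ?sHG.
Qed.

Lemma mxtrace_repr_L2 f : \tr (repr_L2 f) = \sum_(s in H) f s * cfRepr rG s.
Proof.
rewrite /repr_L2 linear_sum; apply: eq_bigr => s Hs.
by rewrite linearZ /= cfunE sHG // mulr1n.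
Qed.

Lemma repr_coef_eq_scale f c v : (forall s, s \notin H -> f s = 0) ->
  repr_coef v = c *: f <-> forall s, s \in H -> ipC v (rG s *m v) = c * f s.
Proof.
move=> f_supp; split=> [cf s Hs|cf].
  by have := congr1 (fun h : L2 gT => h s) cf; rewrite !ffunE Hs.
apply/ffunP => s; rewrite !ffunE scaleCE.
by case: ifPn => [/cf //|/f_supp ->]; rewrite mulr0.
Qed.

Lemma op_entry_Pi_chi_Pi1' p g1 g2 : g1 \in G -> g2 \in G ->
  op_entry (fun f => Pi_chi G (cfRepr rG) (Pi1' G H p f)) g1 g2 =
  d%:R / #|G|%:R * \tr (repr_L2 p *m rG (g1^-1 * g2)%g).
Proof.
move=> G1 G2; set chi := cfRepr rG.
rewrite /op_entry /Pi_chi /Pi1' cfRepr1 [LHS]ffunE scaleCE ffunE; congr (_ * _).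
under eq_bigr => g Gg do rewrite ffunE -/(lreg G g2 (ext0 H p)) lregE //.
have inj : injective (fun h : gT => g1 * h^-1 * g2^-1)%g.
  by move=> a b /mulIg /mulgI /invg_inj.
transitivity (\sum_(h in G) (chi (g1 * h^-1 * g2^-1)%g)^* * ext0 H p h).
  rewrite (reindex_inj inj) /=; apply: eq_big => [h|h Gh].
    by rewrite groupMr ?groupV // groupMl // groupV.
  by rewrite !invMg !invgK !mulgA mulVg mul1g mulgKV.
rewrite (big_setID H) /= (setIidPr HG) [X in _ + X]big1 ?addr0; last first.
  by move=> h /setDP[_ Hh]; rewrite ffunE (negbTE Hh) mulr0.
rewrite /repr_L2 mulmx_suml linear_sum; apply: eq_bigr => h Hh.
rewrite ffunE Hh -scalemxAl linearZ /= mulrC; congr (_ * _).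
rewrite -char_inv ?cfRepr_char // cfunE !invMg !invgK !groupM ?groupV ?(sHG Hh) //.
by rewrite mulr1n !repr_mxM ?groupM ?groupV ?(sHG Hh) // mxtrace_mulC -mulmxA.
Qed.

Lemma conv_repr_coef_fixed f v :
  (forall s, s \notin H -> f s = 0) -> (forall s, s \in H -> f s^-1%g = (f s)^*) ->
  repr_L2 f *m v = v -> conv H (repr_coef v) f = repr_coef v.
Proof.
move=> f_supp fV fv; apply/ffunP => s; rewrite !ffunE; case: ifPn => Hs; last first.
  by rewrite big1 // => a Ha; rewrite f_supp ?mulr0 // groupMl ?groupV.
rewrite -[X in rG s *m X]fv repr_L2_mulmx mulmx_sumr ipC_sumr (sum_mulgl _ Hs).
apply: eq_bigr => b Hb.
rewrite -scalemxAr ipCZr mulmxA -repr_mxM ?sHG // ffunE groupM //.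
by rewrite invMg mulgKV fV // mulrC.
Qed.

Hypothesis rG_unitary : unitary_repr rG.

Lemma conv_fixed_repr_coef f v : repr_L2 f *m v = v ->
  conv H f (repr_coef v) = repr_coef v.
Proof.
move=> fv; apply/ffunP => s; rewrite !ffunE.
case: ifPn => Hs; last first.
  by rewrite big1 // => a Ha; rewrite ffunE groupMl ?groupV // (negbTE Hs) mulr0.
transitivity (ipC (repr_L2 f *m v) (rG s *m v)); last by rewrite fv.
rewrite repr_L2_mulmx ipC_suml; apply: eq_bigr => a Ha.
rewrite ffunE groupMl ?groupV // Hs ipCZl (ipC_repr_adj rG_unitary _ _ (sHG Ha)).
by rewrite mulmxA -repr_mxM ?groupV ?groupM ?sHG.
Qed.

Lemma repr_L2_adj f u w : (forall s, s \in H -> f s^-1%g = (f s)^*) ->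
  ipC (repr_L2 f *m u) w = ipC u (repr_L2 f *m w).
Proof.
move=> fV; rewrite !repr_L2_mulmx ipC_suml ipC_sumr (@sum_invg _ _ H).
apply: eq_bigr => s Hs.
by rewrite ipCZl ipCZr ipC_repr_adj ?sHG ?groupV // invgK fV.
Qed.

End RepresentationOnL2.

Section FixedVectors.
Variables (gT : finGroupType) (G H : {group gT}) (d : nat)
  (rG : mx_representation algC G d).
Hypotheses (rG_unitary : unitary_repr rG) (HG : H \subset G).
Variables (W : {vspace L2 gT}) (Pi1 : L2 gT -> L2 gT).
Hypotheses (W_irr : lreg_irreducible H W) (Pi1_proj : is_orth_proj H W Pi1).

Local Notation p := (Pi1 (delta 1%g)).
Local Notation E := (repr_L2 H rG p).

Let W_inv : lreg_invariant H W. Proof. by case: W_irr. Qed.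

Lemma E_idem : E *m E = E.
Proof. by rewrite repr_L2_conv // (conv_pp W_inv Pi1_proj). Qed.

Lemma E_adj u w : ipC (E *m u) w = ipC u (E *m w).
Proof. exact/repr_L2_adj/(pV W_inv Pi1_proj). Qed.

Lemma p1_neq0 : p 1%g != 0.
Proof.
case: W_irr => _ W0 _; apply: contraNneq W0 => p10.
by rewrite -dimv_eq0 -(pnatr_eq0 algC) -(dimv_p1 W_inv Pi1_proj) p10 mulr0 eqxx.
Qed.

(* E is an orthogonal projection and <E v, v> = <v, v>, so |E v - v|^2 = 0. *)
Lemma fixed_of_coef_scale c v : repr_coef H rG v = c *: p -> E *m v = v.
Proof.
move=> cf.
have cf_at s : s \in H -> ipC v (rG s *m v) = c * p s.
  by move=> Hs; have := congr1 (fun f : L2 gT => f s) cf; rewrite !ffunE Hs.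
have p1_real : (p 1%g)^* = p 1%g by rewrite -(pV W_inv Pi1_proj) ?invg1.
have Evv : ipC (E *m v) v = ipC v v.
  rewrite repr_L2_mulmx ipC_suml.
  transitivity (c^* * \sum_(s in H) p s * p (s^-1 * 1)%g).
    rewrite mulr_sumr; apply: eq_bigr => s Hs.
    rewrite ipCZl [ipC (rG s *m v) v]ipCC cf_at // rmorphM /= mulg1.
    by rewrite (pV W_inv Pi1_proj) // mulrCA.
  have := congr1 (fun f : L2 gT => f 1%g) (conv_pp W_inv Pi1_proj); rewrite ffunE => ->.
  by rewrite -p1_real -rmorphM /= -cf_at // repr_mx1 mul1mx -ipCC.
have vEv : ipC v (E *m v) = ipC v v by rewrite ipCC Evv -ipCC.
have EvEv : ipC (E *m v) (E *m v) = ipC v v by rewrite E_adj mulmxA E_idem vEv.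
by apply/eqP; rewrite -subr_eq0 -ipC_eq0 ipCBl !ipCBr Evv vEv EvEv !subrr eqxx.
Qed.

(* Schur's lemma applied to the coefficient function, which lies in W because
   it is fixed by left and right convolution with p. *)
Lemma fixed_repr_coef v : E *m v = v -> repr_coef H rG v = (ipC v v / p 1%g) *: p.
Proof.
move=> Ev.
have coef_conv_mem w : w \in W -> conv H w (repr_coef H rG v) \in W.
  move=> Ww; rewrite -(conv_repr_coef_fixed HG
    (p_supp W_inv Pi1_proj) (pV W_inv Pi1_proj) Ev) -convA.
  exact: conv_p_mem.
have [lam coef_lam] := lreg_irreducible_conv_scalar W_irr coef_conv_mem.
have coef_p : repr_coef H rG v = lam *: p.
  by rewrite -(conv_fixed_repr_coef HG rG_unitary Ev) coef_lam // (p_mem Pi1_proj).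
have : repr_coef H rG v 1%g = ipC v v by rewrite ffunE group1 repr_mx1 mul1mx.
by rewrite coef_p ffunE scaleCE => <-; rewrite mulfK ?p1_neq0.
Qed.

Lemma cyclic_submodule u : E *m u = u -> u != 0 ->
  exists2 V : {vspace 'cV[algC]_d},
    [/\ repr_stable H rG V, \dim V = \dim W & u \in V] &
    forall V', repr_stable H rG V' -> u \in V' -> (V <= V')%VS.
Proof.
move=> Eu u0.
have lin_u : linear (fun f : L2 gT => repr_L2 H rG f *m u).
  move=> a f h; rewrite !repr_L2_mulmx scaler_sumr -big_split; apply: eq_bigr => s _.
  by rewrite !ffunE scaleCE scalerDl scalerA.
have [L LE] := linfun_exists lin_u.
have L_lreg g f : g \in H -> L (lreg H g f) = rG g *m L f.
  by move=> Hg; rewrite !LE repr_L2_lreg // mulmxA.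
have Lp : L p = u by rewrite LE.
have ker_L : (W :&: lker L)%VS = 0%VS.
  have K_inv : lreg_invariant H (W :&: lker L)%VS.
    split=> [x /memv_capP[Wx _]|g x Hg /memv_capP[Wx]]; first exact: W_inv.1.
    rewrite memv_ker => /eqP Lx.
    by rewrite memv_cap W_inv.2 //= memv_ker L_lreg // Lx mulmx0.
  case: W_irr => _ _ /(_ _ (capvSl _ _) K_inv) [//|KW].
  have : p \in (W :&: lker L)%VS by rewrite KW (p_mem Pi1_proj).
  by rewrite memv_cap memv_ker Lp (negbTE u0) andbF.
exists (L @: W)%VS; first split.
- by move=> s x Hs /memv_imgP[w Ww ->]; rewrite -L_lreg // memv_img // W_inv.2.
- by have := limg_ker_dim L W; rewrite ker_L dimv0 add0n.
- by rewrite -Lp memv_img ?(p_mem Pi1_proj).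
move=> V' V'_st uV'; apply/subvP => x /memv_imgP[w Ww ->].
by rewrite LE repr_L2_mulmx memv_suml // => s Hs; rewrite memvZ // V'_st.
Qed.

Definition fixed_pair (V : {vspace 'cV[algC]_d}) (v : 'cV[algC]_d) :=
  [/\ repr_stable H rG V, \dim V = \dim W, v != 0, v \in V & E *m v = v].

Lemma fixed_pairP V v :
  [/\ repr_stable H rG V, (\dim V)%:R = (\dim W)%:R :> algC, v != 0, v \in V &
      forall s, s \in H -> ipC v (rG s *m v) = ipC v v * #|H|%:R / (\dim V)%:R * p s]
  <-> fixed_pair V v.
Proof.
have coefE c := repr_coef_eq_scale rG c v (p_supp W_inv Pi1_proj).
split=> [[V_st dV v0 vV coef] | [V_st dV v0 vV Ev]].
  split=> //; first by apply/eqP; rewrite -(eqr_nat algC) dV.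
  exact: (fixed_of_coef_scale ((coefE _).2 coef)).
split; rewrite ?dV // => s Hs.
rewrite ((coefE _).1 (fixed_repr_coef Ev)) // -(dimv_p1 W_inv Pi1_proj).
by rewrite invfM mulrA mulfK // pnatr_eq0 -lt0n cardG_gt0.
Qed.

Lemma fixed_pair_exists v : E *m v = v -> v != 0 -> exists V, fixed_pair V v.
Proof. by move=> Ev v0; have [V [V_st dV vV] _] := cyclic_submodule Ev v0; exists V. Qed.

Lemma fixed_pair_space V V' v v' :
  fixed_pair V v -> fixed_pair V' v' -> v \in V' -> V = V'.
Proof.
case=> V_st dV v0 vV Ev [V'_st dV' _ _ _] vV'.
have [C [_ dC _] C_min] := cyclic_submodule Ev v0.
have CV : C = V by apply/eqP; rewrite eqEdim C_min // dV dC leqnn.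
have CV' : C = V' by apply/eqP; rewrite eqEdim C_min // dV' dC leqnn.
by rewrite -CV CV'.
Qed.

Lemma unique_fixed_pairP :
  (exists V v, fixed_pair V v /\
     forall V' v', fixed_pair V' v' -> V' = V /\ exists c : algC, v' = c *: v)
  <-> \dim (mx_fixspace E) = 1%N.
Proof.
split=> [[V [v [[V_st dV v0 vV Ev] v_uniq]]] | dU].
  have vU : v \in mx_fixspace E by rewrite mem_mx_fixspace Ev.
  apply/eqP; rewrite eqn_leq lt0n dimv_eq0 andbC; apply/andP; split.
    by apply: contraTneq vU => ->; rewrite memv0.
  have [sUv|/subvPn[u uU uNv]] := boolP (mx_fixspace E <= <[v]>)%VS.
    by have := dimvS sUv; rewrite dim_vline v0.
  have u0 : u != 0 by apply: contraNneq uNv => ->; rewrite mem0v.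
  have Eu : E *m u = u by apply/eqP; rewrite -mem_mx_fixspace.
  have [Vu Vu_u] := fixed_pair_exists Eu u0.
  have [_ [c uc]] := v_uniq Vu u Vu_u.
  by move: uNv; rewrite uc memvZ ?memv_line.
have v0 : vpick (mx_fixspace E) != 0 by rewrite vpick0 -dimv_eq0 dU.
have U_line := dimv1_line (memv_pick _) v0 dU.
set v := vpick _ in v0 U_line.
have Ev : E *m v = v by apply/eqP; rewrite -mem_mx_fixspace U_line memv_line.
have [V Vv] := fixed_pair_exists Ev v0.
exists V, v; split => // V' v' V'v'.
have /vlineP[c v'c] : v' \in <[v]>%VS.
  by case: V'v' => _ _ _ _ Ev'; rewrite -U_line mem_mx_fixspace Ev'.
split; last by exists c.
have v'V : v' \in V by case: Vv => _ _ _ vV _; rewrite v'c memvZ.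
exact: fixed_pair_space V'v' Vv v'V.
Qed.

Lemma sum_char_afforded_rank :
  \sum_(s in H) cfRepr rG s * (afforded_char H W s)^* =
  #|H|%:R * (\dim (mx_fixspace E))%:R.
Proof.
rewrite (sum_cfun_afforded_char W_inv Pi1_proj _ HG) -(mxtrace_idem E_idem).
by rewrite mxtrace_repr_L2 //; congr (_ * _); apply: eq_bigr => s _; rewrite mulrC.
Qed.

Lemma sum_char_afforded_card :
  \sum_(s in H) cfRepr rG s * (afforded_char H W s)^* = #|H|%:R <->
  \dim (mx_fixspace E) = 1%N.
Proof.
rewrite sum_char_afforded_rank; split=> [|->]; last by rewrite mulr1.
rewrite -{2}[#|H|%:R]mulr1 => /(mulfI _)/eqP.
by rewrite pnatr_eq1 pnatr_eq0 -lt0n cardG_gt0 => /(_ isT)/eqP.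
Qed.

Section RankOne.
Variable v : 'cV[algC]_d.
Hypotheses (Ev : E *m v = v) (v0 : v != 0) (dU : \dim (mx_fixspace E) = 1%N).

Lemma E_rank1 x : E *m x = (ipC x v / ipC v v) *: v.
Proof.
have vU : v \in mx_fixspace E by rewrite mem_mx_fixspace Ev.
have U_line := dimv1_line vU v0 dU.
have /vlineP[k Ek] : E *m x \in <[v]>%VS by rewrite -U_line mulmx_fixspace ?E_idem.
rewrite Ek; congr (_ *: _).
have : ipC (E *m x) v = ipC x v by rewrite E_adj Ev.
by rewrite Ek ipCZl => <-; rewrite mulfK // ipC_eq0.
Qed.

Lemma mxtrace_E_mul (M : 'M[algC]_d) : \tr (E *m M) = ipC (M *m v) v / ipC v v.
Proof.
rewrite mxtrace_mulC /mxtrace /ipC mulr_suml; apply: eq_bigr => i _.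
have -> : (M *m E) i i = (M *m (E *m delta_mx i (0 : 'I_1))) i 0.
  by rewrite mulmxA -colE [RHS]mxE.
by rewrite E_rank1 -scalemxAr mxE ipC_delta_mx mulrC mulrA.
Qed.

Hypothesis rG_irr : mx_irreducible rG.

Lemma gram_entry g1 g2 : g1 \in G -> g2 \in G ->
  ipC (rG g2 *m v) (rG g1 *m v) =
  ipC v v * (#|G|%:R / d%:R) *
  op_entry (fun f => Pi_chi G (cfRepr rG) (Pi1' G H p f)) g1 g2.
Proof.
move=> G1 G2; rewrite op_entry_Pi_chi_Pi1' // mxtrace_E_mul.
rewrite repr_mxM ?groupV // -mulmxA (ipC_repr_adj rG_unitary _ _ (groupVr G1)) invgK.
have dn0 : d%:R != 0 :> algC by rewrite pnatr_eq0 -lt0n (repr_dim_gt0 rG_irr).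
have Gn0 : #|G|%:R != 0 :> algC by rewrite pnatr_eq0 -lt0n cardG_gt0.
have vn0 : ipC v v != 0 by rewrite ipC_eq0.
by field; rewrite vn0 Gn0 dn0.
Qed.

End RankOne.
End FixedVectors.

Theorem mainTheorem2 (gT : finGroupType) (G H : {group gT}) (d : nat)
  (rG : mx_representation algC G d)
  (rG_irr : mx_irreducible rG) (rG_unitary : unitary_repr rG)
  (HG : H \subset G) (nu : 'CF(H)) (nu_irr : nu \in irr H)
  (W : {vspace L2 gT}) (W_irr : lreg_irreducible H W)
  (W_nu : forall s, s \in H -> afforded_char H W s = nu s)
  (Pi1 : L2 gT -> L2 gT) (Pi1_proj : is_orth_proj H W Pi1) :
  let chi := cfRepr rG in
  let p := Pi1 (delta 1%g) in
  let P (V : {vspace 'cV[algC]_d}) (v : 'cV[algC]_d) :=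
    [/\ forall s w, s \in H -> w \in V -> rG s *m w \in V,
        (\dim V)%:R = nu 1%g, v != 0, v \in V &
        forall s, s \in H ->
          ipC v (rG s *m v) = ipC v v * #|H|%:R / (\dim V)%:R * p s] in
  ((exists V v, P V v /\
      forall V' v', P V' v' -> V' = V /\ exists c : algC, v' = c *: v)
   <-> \sum_(s in H) chi s * (nu s)^* = #|H|%:R)
  /\
  (\sum_(s in H) chi s * (nu s)^* = #|H|%:R ->
   forall V v, P V v ->
     tight_frame G (fun g => rG g *m v) /\
     forall g1 g2, g1 \in G -> g2 \in G ->
       ipC (rG g2 *m v) (rG g1 *m v) =
       ipC v v * (#|G|%:R / d%:R) *
       op_entry (fun f => Pi_chi G chi (Pi1' G H p f)) g1 g2).
Proof.
move=> chi p P.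
have nu1 : nu 1%g = (\dim W)%:R by rewrite -W_nu // afforded_char1.
have PE V v : P V v <-> fixed_pair H rG W Pi1 V v.
  by rewrite /P nu1; apply: fixed_pairP.
have -> : \sum_(s in H) chi s * (nu s)^* = \sum_(s in H) chi s * (afforded_char H W s)^*.
  by apply: eq_bigr => s Hs; rewrite W_nu.
have sumE := sum_char_afforded_card rG HG W_irr Pi1_proj.
split.
  apply: iff_trans (iff_trans _ (unique_fixed_pairP rG HG W_irr Pi1_proj)) (iff_sym sumE).
  by split=> -[V [v [/PE Vv v_uniq]]]; exists V, v; split=> // V' v' /PE; apply: v_uniq.
move=> /sumE dU V v /PE [_ _ v0 _ Ev]; split; first exact: tight_frame_orbit.
by move=> g1 g2 G1 G2; rewrite (gram_entry rG_unitary HG W_irr Pi1_proj Ev v0 dU rG_irr G1 G2).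
Qed.
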